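(* Let $s\in\mathbb N$, $2\le q\le s$, let $c\in\mathbb R^s$ be a node vector with distinct entries, $C:=\mathrm{diag}(c_1,\dots,c_s)$, and let $A,B\in\mathbb R^{s\times s}$ and a diagonal matrix $K=\mathrm{diag}(\kappa_{11},\dots,\kappa_{ss})$ satisfy $AV_s=BV_s\mathcal P_s^{-1}+KV_s\tilde E_s$, so that $$\mathcal Q_{q,s}:=V_q^{\mathsf T}BV_s\mathcal P_s^{-1}=V_q^{\mathsf T}(AV_s-KV_s\tilde E_s).$$ (a) $\mathcal Q_{q,s}$ has Hankel form if and only if $V_{q-1}^{\mathsf T}(AC-CA-K)V_{s-1}=0$. (b) If $q=3$, $s=4$, $A$ is lower triangular and $\mathcal Q_{3,4}$ has Hankel form, then $\kappa_{33}=e_3^{\mathsf T}Ke_3=0$.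
   Context: $V_k:=(\mathbb 1,c,c^2,\dots,c^{k-1})\in\mathbb R^{s\times k}$ (componentwise powers), $\mathcal P_k:=\big(\binom{j-1}{i-1}\big)_{i,j=1}^k$, $\tilde E_k:=(i\,\delta_{i+1,j})_{i,j=1}^k$, $e_3$ the third cardinal basis vector. A matrix $X=(x_{ij})$ has Hankel form if $x_{ij}$ depends only on $i+j$. *)

From mathcomp Require Import all_boot all_order all_algebra.
Set Implicit Arguments. Unset Strict Implicit. Unset Printing Implicit Defensive.
Import Order.TTheory GRing.Theory Num.Theory.
Local Open Scope ring_scope.

(* All indices are 0-based: entry (i,j) here is entry (i+1,j+1) of the paper. *)

Definition Vmx (R : nzRingType) (s k : nat) (c : 'rV[R]_s) : 'M[R]_(s, k) :=
  \matrix_(i < s, j < k) (c 0 i) ^+ j.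

Definition PascalMx (R : nzRingType) (k : nat) : 'M[R]_k :=
  \matrix_(i < k, j < k) ('C(j, i))%:R.

Definition Etilde (R : nzRingType) (k : nat) : 'M[R]_k :=
  \matrix_(i < k, j < k) (if j == i.+1 :> nat then (i.+1)%:R else 0).

Definition hankel (R : nzRingType) (m n : nat) (X : 'M[R]_(m, n)) : Prop :=
  forall (i i' : 'I_m) (j j' : 'I_n), (i + j = i' + j')%N -> X i j = X i' j'.

Definition Qmx (R : comUnitRingType) (s q : nat) (c : 'rV[R]_s) (B : 'M[R]_s)
  : 'M[R]_(q, s) :=
  (Vmx q c)^T *m B *m Vmx s c *m invmx (PascalMx R s).

(* With the moments mu_ij(M) := sum_(k,l) c_k^i M_kl c_l^j, the matrix V_a^T M V_b
   is (mu_ij(M))_ij. Column j of V_s Etilde_s is j c^(j-1), and mu_ij(K) only depends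
   on i + j when K is diagonal, so the anti-diagonal defect Q_(i,j+1) - Q_(i+1,j) of
   Q = V_q^T (A V_s - K V_s Etilde_s) is mu_ij(AC - CA - K); this gives (a).
   For (b), M := AC - CA - K is lower triangular with M_33 = -kappa_33, and
   V_2^T M V_3 = 0 says that sum_(k,l) p(c_k) M_kl r(c_l) = 0 whenever deg p <= 1
   and deg r <= 2. For p = x - c_4 and r = (x - c_1)(x - c_2) only the (3,3) term
   survives, leaving -kappa_33 (c_3 - c_4)(c_3 - c_1)(c_3 - c_2) = 0. *)

From mathcomp Require Import all_boot all_order all_algebra.
From mathcomp Require Import zify ring.
Set Implicit Arguments. Unset Strict Implicit. Unset Printing Implicit Defensive.
Import Order.TTheory GRing.Theory Num.Theory.
Local Open Scope ring_scope.

Lemma hankel_shiftP (R : nzRingType) m n (X : 'M[R]_(m.+1, n.+1)) :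
  hankel X <-> (forall (i : 'I_m) (j : 'I_n),
     X (inord i) (inord j.+1) = X (inord i.+1) (inord j)).
Proof.
split=> [H i j | H].
  by have := ltn_ord i; have := ltn_ord j => ? ?; apply: H; rewrite !inordK; lia.
have slide d i j : (i + d <= m)%N -> (d <= j <= n)%N ->
    X (inord i) (inord j) = X (inord (i + d)) (inord (j - d)).
  elim: d i j => [|d IH] i j le_im le_jn; first by rewrite addn0 subn0.
  have lt_im : (i + d < m)%N by lia.
  have lt_jn : (j - d.+1 < n)%N by lia.
  rewrite (IH i j); [|lia|lia].
  have -> : (j - d = (j - d.+1).+1)%N by lia.
  by rewrite (H (Ordinal lt_im) (Ordinal lt_jn)) addnS.
move=> i i' j j' eq_sum.
wlog le_ii' : i i' j j' eq_sum / (i <= i')%N.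
  by move=> W; case: (leqP i i') => [|/ltnW] le; [|symmetry]; apply: W; lia.
rewrite -(inord_val i) -(inord_val j) -(inord_val i') -(inord_val j').
have := ltn_ord i'; have := ltn_ord j => lt_jn lt_i'm.
by rewrite (slide (i' - i)%N); [congr (X (inord _) (inord _))|..]; lia.
Qed.

Section Moments.
Variables (R : comNzRingType) (s : nat) (c : 'rV[R]_s).

Definition moment (M : 'M[R]_s) (i j : nat) : R :=
  \sum_k \sum_l c 0 k ^+ i * M k l * c 0 l ^+ j.

Lemma trVmx_mulmx_entry a n (M : 'M[R]_s) (X : 'M[R]_(s, n)) i j :
  ((Vmx a c)^T *m M *m X) i j = \sum_k \sum_l c 0 k ^+ i * M k l * X l j.
Proof.
rewrite mxE; under eq_bigr do rewrite mxE mulr_suml.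
by rewrite exchange_big; apply: eq_bigr => k _; apply: eq_bigr => l _; rewrite !mxE.
Qed.

Lemma trVmx_mul_Vmx_entry a b (M : 'M[R]_s) i j :
  ((Vmx a c)^T *m M *m Vmx b c) i j = moment M i j.
Proof.
rewrite trVmx_mulmx_entry; apply: eq_bigr => k _; apply: eq_bigr => l _.
by rewrite mxE.
Qed.

Lemma Vmx_mul_Etilde_entry n k (j : 'I_n) :
  (Vmx n c *m Etilde R n) k j = j%:R * c 0 k ^+ j.-1.
Proof.
rewrite mxE; case: j => [[|j] lt_jn] /=.
  by rewrite mul0r big1 // => m _; rewrite !mxE mulr0.
rewrite (bigD1 (Ordinal (ltnW lt_jn))) //= big1 => [|m ne_mj].
  by rewrite !mxE eqxx addr0 mulrC.
rewrite !mxE /=; case: eqP => [[eq_jm]|]; last by rewrite mulr0.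
by move: ne_mj; rewrite -val_eqE /= eq_jm eqxx.
Qed.

Lemma momentB (M N : 'M[R]_s) i j :
  moment (M - N) i j = moment M i j - moment N i j.
Proof.
rewrite /moment -sumrB; apply: eq_bigr => k _; rewrite -sumrB.
by apply: eq_bigr => l _; rewrite !mxE; ring.
Qed.

Lemma moment_mul_diag_mx (M : 'M[R]_s) i j :
  moment (M *m diag_mx c) i j = moment M i j.+1.
Proof.
apply: eq_bigr => k _; apply: eq_bigr => l _.
by rewrite mul_mx_diag mxE exprS; ring.
Qed.

Lemma moment_diag_mx_mul (M : 'M[R]_s) i j :
  moment (diag_mx c *m M) i j = moment M i.+1 j.
Proof.
apply: eq_bigr => k _; apply: eq_bigr => l _.
by rewrite mul_diag_mx mxE exprS; ring.
Qed.

Lemma moment_diag (K : 'M[R]_s) i j : is_diag_mx K ->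
  moment K i j = \sum_k c 0 k ^+ (i + j) * K k k.
Proof.
move=> /is_diag_mxP K_diag; apply: eq_bigr => k _.
rewrite (bigD1 k) //= big1 ?addr0 => [|l ne_lk]; first by rewrite exprD; ring.
by rewrite K_diag ?mulr0 ?mul0r // eq_sym.
Qed.

Lemma moment_diagS (K : 'M[R]_s) i j : is_diag_mx K ->
  moment K i.+1 j = moment K i j.+1.
Proof. by move=> K_diag; rewrite !moment_diag // addnS. Qed.

Lemma trVmx_mul_entry a (A K : 'M[R]_s) i (j : 'I_s) :
  ((Vmx a c)^T *m (A *m Vmx s c - K *m Vmx s c *m Etilde R s)) i j =
  moment A i j - j%:R * moment K i j.-1.
Proof.
rewrite mulmxBr !mulmxA -[_ *m K *m _ *m _]mulmxA.
rewrite [LHS]mxE [X in _ + X]mxE trVmx_mul_Vmx_entry trVmx_mulmx_entry.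
rewrite mulr_sumr; congr (_ - _); apply: eq_bigr => k _.
rewrite mulr_sumr; apply: eq_bigr => l _.
by rewrite Vmx_mul_Etilde_entry; ring.
Qed.

Lemma moment_commutator (A K : 'M[R]_s) i j : is_diag_mx K ->
  moment (A *m diag_mx c - diag_mx c *m A - K) i j =
  (moment A i j.+1 - j.+1%:R * moment K i j) -
  (moment A i.+1 j - j%:R * moment K i.+1 j.-1).
Proof.
move=> K_diag; rewrite !momentB moment_mul_diag_mx moment_diag_mx_mul.
case: j => [|j] /=; rewrite ?mul0r ?(moment_diagS _ _ K_diag) //.
(* [ring] does not treat the [moment] terms as atoms, so abstract them first. *)
all: move: (moment A _ _) (moment A _ _) (moment K _ _) => x y z; ring.
Qed.

End Moments.

Lemma hankel_trVmx_mulP (R : comNzRingType) q s (c : 'rV[R]_s.+1)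
    (A K : 'M[R]_s.+1) : is_diag_mx K ->
  hankel ((Vmx q.+1 c)^T *m (A *m Vmx s.+1 c - K *m Vmx s.+1 c *m Etilde R s.+1))
  <-> (Vmx q c)^T *m (A *m diag_mx c - diag_mx c *m A - K) *m Vmx s c = 0.
Proof.
move=> K_diag; set Q := _ *m _; set N := _ *m _ *m _.
have shift (i : 'I_q) (j : 'I_s) :
    Q (inord i) (inord j.+1) - Q (inord i.+1) (inord j) = N i j.
  rewrite !trVmx_mul_entry trVmx_mul_Vmx_entry moment_commutator //.
  by have := ltn_ord i; have := ltn_ord j => ? ?; rewrite !inordK //; lia.
rewrite hankel_shiftP; split=> [eqQ | N0 i j].
  by apply/matrixP => i j; rewrite -shift eqQ subrr mxE.
by apply/eqP; rewrite -subr_eq0 shift N0 mxE.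
Qed.

Lemma QmxE (R : comUnitRingType) s q (c : 'rV[R]_s) (A B K : 'M[R]_s) :
  A *m Vmx s c = B *m Vmx s c *m invmx (PascalMx R s) + K *m Vmx s c *m Etilde R s ->
  Qmx q c B = (Vmx q c)^T *m (A *m Vmx s c - K *m Vmx s c *m Etilde R s).
Proof. by move=> ->; rewrite addrK /Qmx !mulmxA. Qed.

Lemma trVmx_mul_Vmx_eq0_horner (R : comNzRingType) a b s (c : 'rV[R]_s)
    (M : 'M[R]_s) (p r : {poly R}) :
  (Vmx a c)^T *m M *m Vmx b c = 0 -> (size p <= a)%N -> (size r <= b)%N ->
  \sum_k \sum_l p.[c 0 k] * M k l * r.[c 0 l] = 0.
Proof.
move=> N0 size_p size_r.
transitivity (\sum_(u : 'I_a * 'I_b) \sum_(v : 'I_s * 'I_s)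
    p`_u.1 * r`_u.2 * (c 0 v.1 ^+ u.1 * M v.1 v.2 * c 0 v.2 ^+ u.2)).
  rewrite pair_bigA exchange_big; apply: eq_bigr => v _ /=.
  rewrite (horner_coef_wide _ size_p) (horner_coef_wide _ size_r) mulr_suml.
  rewrite big_distrlr pair_bigA; apply: eq_bigr => u _ /=; ring.
apply: big1 => u _.
rewrite -mulr_sumr -(pair_bigA _ (fun k l => c 0 k ^+ u.1 * M k l * c 0 l ^+ u.2)).
by rewrite -[\sum_k _]/(moment c M u.1 u.2) -trVmx_mul_Vmx_entry N0 mxE mulr0.
Qed.

Lemma commutator_sub_entry (R : comNzRingType) s (c : 'rV[R]_s) (A K : 'M[R]_s) k l :
  (A *m diag_mx c - diag_mx c *m A - K) k l = (c 0 l - c 0 k) * A k l - K k l.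
Proof. by rewrite mul_mx_diag mul_diag_mx !mxE; ring. Qed.

Lemma commutator_sub_diag_trig (R : comNzRingType) s (c : 'rV[R]_s) (A K : 'M[R]_s) :
  is_trig_mx A -> is_diag_mx K -> is_trig_mx (A *m diag_mx c - diag_mx c *m A - K).
Proof.
move=> /is_trig_mxP A_trig /is_diag_mxP K_diag; apply/is_trig_mxP => k l lt_kl.
by rewrite commutator_sub_entry A_trig ?K_diag ?mulr0 ?subr0 // neq_ltn lt_kl.
Qed.

Lemma trig_trVmx_mul_Vmx_eq0_entry22 (R : idomainType) (c : 'rV[R]_4) (M : 'M[R]_4) :
  injective (fun i => c 0 i) -> is_trig_mx M -> (Vmx 2 c)^T *m M *m Vmx 3 c = 0 ->
  M (inord 2) (inord 2) = 0.
Proof.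
move=> c_inj /is_trig_mxP M_trig N0.
pose x m := c 0 (inord m : 'I_4).
pose p := 'X - (x 3%N)%:P; pose r := ('X - (x 0%N)%:P) * ('X - (x 1%N)%:P).
have size_r : (size r <= 3)%N.
  by rewrite (leq_trans (size_mul_leq _ _)) // !size_XsubC.
have size_p : (size p <= 2)%N by rewrite size_XsubC.
have := trVmx_mul_Vmx_eq0_horner N0 size_p size_r.
have term0 k l : (k != inord 2) || (l != inord 2) ->
    p.[c 0 k] * M k l * r.[c 0 l] = 0.
  move=> ne_kl; rewrite !(hornerM, hornerXsubC).
  case: (ltnP l 2) => [lt_l2 | ge_l2].
    have [l0|l1] : (l = 0 :> nat)%N \/ (l = 1 :> nat)%N by lia.
      by rewrite -(inord_val l) l0 subrr mul0r mulr0.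
    by rewrite -(inord_val l) l1 subrr !mulr0.
  case: (eqVneq k (inord 3)) => [-> | ne_k3]; first by rewrite subrr !mul0r.
  rewrite M_trig ?mulr0 ?mul0r //.
  move: ne_kl ne_k3; rewrite -!val_eqE /= !inordK //.
  by have := ltn_ord k; have := ltn_ord l; lia.
have outer0 : \sum_(k | k != inord 2) \sum_l p.[c 0 k] * M k l * r.[c 0 l] = 0.
  by apply: big1 => k ne_k2; apply: big1 => l _; apply: term0; rewrite ne_k2.
have inner0 : \sum_(l | l != inord 2) p.[x 2%N] * M (inord 2) l * r.[c 0 l] = 0.
  by apply: big1 => l ne_l2; apply: term0; rewrite ne_l2 orbT.
rewrite (bigD1 (inord 2)) //= outer0 (bigD1 (inord 2)) //= inner0 !addr0.
have x_neq m : (m < 4)%N -> m != 2%N -> c 0 (inord 2) != c 0 (inord m).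
  move=> lt_m4 ne_m2; apply: contra ne_m2 => /eqP/c_inj/(congr1 (@nat_of_ord 4)).
  by rewrite !inordK // => <-.
rewrite /p /r !(hornerM, hornerXsubC) => /eqP; rewrite !mulf_eq0 !subr_eq0.
by rewrite !(negPf (x_neq _ _ _)) // !orbF => /eqP.
Qed.

Theorem theorem6p1 (R : realFieldType) :
  (* (a) *)
  (forall (s q : nat) (c : 'rV[R]_s) (A B K : 'M[R]_s),
      (2 <= q)%N -> (q <= s)%N ->
      injective (fun i : 'I_s => c 0 i) ->
      is_diag_mx K ->
      A *m Vmx s c = B *m Vmx s c *m invmx (PascalMx R s) + K *m Vmx s c *m Etilde R s ->
      (hankel (Qmx q c B) <->
       (Vmx q.-1 c)^T *m (A *m diag_mx c - diag_mx c *m A - K) *m Vmx s.-1 c = 0))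
  /\
  (* (b) *)
  (forall (c : 'rV[R]_4) (A B K : 'M[R]_4),
      injective (fun i : 'I_4 => c 0 i) ->
      is_diag_mx K ->
      A *m Vmx 4 c = B *m Vmx 4 c *m invmx (PascalMx R 4) + K *m Vmx 4 c *m Etilde R 4 ->
      is_trig_mx A ->
      hankel (Qmx 3 c B) ->
      K (inord 2) (inord 2) = 0).
Proof.
split.
  move=> [|s] [|q] c A B K // _ _ _ K_diag AVE.
  by rewrite (QmxE _ AVE) hankel_trVmx_mulP.
move=> c A B K c_inj K_diag AVE A_trig.
rewrite (QmxE _ AVE) hankel_trVmx_mulP // => N0.
have := trig_trVmx_mul_Vmx_eq0_entry22 c_inj (commutator_sub_diag_trig c A_trig K_diag) N0.
by rewrite commutator_sub_entry subrr mul0r sub0r => /eqP; rewrite oppr_eq0 => /eqP.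
Qed.
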